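(* Let $G = (X \dot\cup Y, E)$ be a $k$-regular bipartite graph on $2n$ vertices, with $k = \omega\left( \frac{n}{\log^{1/3} n} \right)$ and $n$ sufficiently large. Set $\varepsilon = \frac{n}{k\log^{1/3}(n)} = o(1)$. There exist $m = 2^{\Theta(n/k)}$ and cuts $(S_1,T_1),\ldots,(S_m,T_m)$ with the following properties. (1) For every $i\in[m]$ and $x\in V(G)$, $\deg^{\mathrm{Cr}}_{G,S_i,T_i}(x) \le (1+\varepsilon)\frac{k}{2}$. (2) Every internal cut $(S,T)$ with $|S|>|T|$ is $\varepsilon k$-close to $(S_i,T_i)$ for some $i\in[m]$.
   Context: A cut in $G$ is a pair $(S,T)$ with $S\subseteq X$, $T\subseteq Y$; write $S^c = X\setminus S$, $T^c = Y\setminus T$. The cross edges of $G$ with respect to $(S,T)$ are the edges between $S\cup T$ and $S^c\cup T^c$ (i.e., edges joining $S$ to $T^c$ or $S^c$ to $T$); the remaining edges are parallel. $\deg^{\mathrm{Cr}}_{G,S,T}(x)$ is the number of cross edges incident to $x$. The distance between cuts is $d((S_1,T_1),(S_2,T_2)) = |S_1\setminus S_2|+|S_2\setminus S_1|+|T_1\setminus T_2|+|T_2\setminus T_1|$, and two cuts are $C$-close if their distance is at most $C$. A cut is internal if it has at most $4nk/\log n$ cross edges. $[m]=\{1,\dots,m\}$; $\log$ is the natural logarithm. *)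

From mathcomp Require Import all_boot.
From Stdlib Require Import Reals.
Set Implicit Arguments. Unset Strict Implicit. Unset Printing Implicit Defensive.

(* A bipartite graph G = (X ∪ Y, E) with X = Y = 'I_n (two disjoint copies),
   given by its bipartite adjacency relation adj : X -> Y -> bool. *)
Definition bip_regular (n k : nat) (adj : 'I_n -> 'I_n -> bool) : Prop :=
  (forall x : 'I_n, #|[set y | adj x y]| = k) /\
  (forall y : 'I_n, #|[set x | adj x y]| = k).

(* edge xy (x in X, y in Y) is a cross edge of the cut (S,T), S ⊆ X, T ⊆ Y,
   iff exactly one of x ∈ S, y ∈ T holds (S to T^c, or S^c to T). *)
Definition is_cross (n : nat) (adj : 'I_n -> 'I_n -> bool) (S T : {set 'I_n})
  (x y : 'I_n) : bool := adj x y && ((x \in S) != (y \in T)).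

Definition degCr_X n adj (S T : {set 'I_n}) (x : 'I_n) : nat :=
  #|[set y | is_cross adj S T x y]|.
Definition degCr_Y n adj (S T : {set 'I_n}) (y : 'I_n) : nat :=
  #|[set x | is_cross adj S T x y]|.

Definition num_cross n adj (S T : {set 'I_n}) : nat :=
  #|[set p : 'I_n * 'I_n | is_cross adj S T p.1 p.2]|.

Definition cut_dist n (S1 T1 S2 T2 : {set 'I_n}) : nat :=
  #|S1 :\: S2| + #|S2 :\: S1| + #|T1 :\: T2| + #|T2 :\: T1|.

Definition internal_cut (n k : nat) adj (S T : {set 'I_n}) : Prop :=
  (INR (num_cross adj S T) <= 4 * INR n * INR k / ln (INR n))%R.

Definition log13 (n : nat) : R := Rpower (ln (INR n)) (1/3).

From mathcomp Require Import all_boot zify.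
From Stdlib Require Import Classical Reals Lra Psatz.
From Coquelicot Require Rcomplements.
(* [Reals] rebinds [^] on [nat] to [Nat.pow]; restore ssrnat's [expn]. *)
Import ssrnat.
Set Implicit Arguments. Unset Strict Implicit. Unset Printing Implicit Defensive.

(* View G as a k-regular graph on X + Y and a cut as a vertex set U.  Toggling
   a vertex with more than (k + d)/2 cross edges, where d = eps k, removes more
   than d cross edges, so local search moves U to a stable cut within distance
   (number of cross edges of U)/d, which is small when U is internal.

   To need only 2^O(n/k) stable cuts, refine the vertices into atoms (equal
   membership in every set of a list Q of internal cuts), adding an internal
   cut to Q as long as one splits a big atom (more than k/2 vertices) into two
   big parts.  Each step creates a new big atom and there are at most
   J = 4n/k of them, so at most J steps occur.  Vertices in small atoms are
   few, since each has k/2 neighbours separated from it by a cut of Q.  Hence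
   every internal cut U agrees, up to few vertices, with its rounding: the
   union of the big atoms in which U has a majority.  There are at most 2^J
   roundings, and one stable cut per rounding serves all internal cuts with
   that rounding. *)

Lemma card_imset_lt_refine (T T1 T2 : finType) (f : T -> T1) (g : T -> T2)
    (X : {set T}) a b :
  (forall u v, g u = g v -> f u = f v) ->
  a \in X -> b \in X -> f a = f b -> g a != g b -> #|f @: X| < #|g @: X|.
Proof.
move=> fg aX bX fab gab.
pose h y := f (odflt a [pick x in X | g x == y]).
have hg x : x \in X -> h (g x) = f x.
  move=> xX; rewrite /h; case: pickP => [x' /andP[_ /eqP/fg] //|/(_ x)].
  by rewrite xX eqxx.
have -> : f @: X = h @: (g @: X).
  by rewrite -imset_comp; apply: eq_in_imset => x xX; rewrite /= hg.
rewrite ltn_neqAle leq_imset_card andbT.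
apply/negP => /imset_injP inj; move/eqP: gab; apply.
by apply: inj; rewrite ?imset_f // !hg.
Qed.

Lemma card_sum_set (T1 T2 : finType) (A : {set T1 + T2}) :
  #|A| = #|[set x | inl x \in A]| + #|[set y | inr y \in A]|.
Proof.
rewrite -sum1_card big_sumType /= -!sum1dep_card.
by congr (_ + _); apply: eq_bigl => x; rewrite inE.
Qed.

Lemma card_symdiff (T : finType) (A B : {set T}) :
  #|[set x | (x \in A) != (x \in B)]| = #|A :\: B| + #|B :\: A|.
Proof.
rewrite -cardsUI.
have -> : (A :\: B) :&: (B :\: A) = set0.
  by apply/setP => x; rewrite !inE; case: (x \in A); case: (x \in B).
rewrite cards0 addn0; apply: eq_card => x; rewrite !inE.
by case: (x \in A); case: (x \in B).
Qed.

Section RegularGraph.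

Variables (V : finType) (e : rel V) (k : nat).
Hypothesis e_sym : symmetric e.
Hypothesis e_irr : irreflexive e.
Hypothesis e_reg : forall v, #|[set u | e v u]| = k.

Implicit Types (U W X A R : {set V}) (Q : seq {set V}) (u v w x : V).

Definition cut_deg U v :=
  #|[set u | e v u && ((u \in U) != (v \in U))]|.
Definition cut_weight U := \sum_v cut_deg U v.
Definition toggle U w := [set u | (u \in U) != (u == w)].
Definition sdist U W := #|[set u | (u \in U) != (u \in W)]|.
Definition stable t U := [forall v, 2 * cut_deg U v <= k + t].

Lemma sum_adj_pred (P : pred V) w :
  \sum_v (e v w && P v) = #|[set u | e w u && P u]|.
Proof.
rewrite -sum1dep_card [RHS]big_mkcond /=; apply: eq_bigr => v _.
by rewrite e_sym; case: (_ && _).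
Qed.

Lemma cut_deg_toggle_other U w v : v != w ->
  cut_deg (toggle U w) v + (e v w && ((w \in U) != (v \in U))) =
  cut_deg U v + (e v w && ((w \in U) == (v \in U))).
Proof.
move=> vw; rewrite /cut_deg (cardsD1 w [set u | _ && _]).
rewrite [in RHS](cardsD1 w [set u | _ && _]).
have -> : [set u | e v u && ((u \in toggle U w) != (v \in toggle U w))] :\ w =
          [set u | e v u && ((u \in U) != (v \in U))] :\ w.
  apply/setP => u; rewrite !inE (negbTE vw).
  by case: (u =P w) => //= _; case: (e v u); case: (u \in U); case: (v \in U).
rewrite !inE eqxx (negbTE vw) /=.
by case: (e v w); case: (w \in U); case: (v \in U) => /=; lia.
Qed.

Lemma cut_deg_toggle_self U w : cut_deg (toggle U w) w + cut_deg U w = k.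
Proof.
rewrite /cut_deg -(e_reg w) addnC.
rewrite -(cardsID [set u | (u \in U) != (w \in U)] [set u | e w u]).
congr (_ + _); apply: eq_card => u; rewrite !inE ?eqxx //.
have [->|_] := eqVneq u w; first by rewrite e_irr andbF.
by case: (e w u); case: (u \in U); case: (w \in U).
Qed.

(* Toggling [w] flips the status of exactly the k edges at [w]. *)
Lemma cut_weight_toggle U w :
  cut_weight (toggle U w) + 4 * cut_deg U w = cut_weight U + 2 * k.
Proof.
have drop_w (P : pred V) :
    \sum_(v | v != w) (e v w && P v) = #|[set u | e w u && P u]|.
  by rewrite -sum_adj_pred [RHS](bigD1 w) //= e_irr.
have cross_sum :
    \sum_(v | v != w) (e v w && ((w \in U) != (v \in U))) = cut_deg U w.
  by rewrite drop_w; apply: eq_card => u; rewrite !inE eq_sym.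
have deg_sum : \sum_(v | v != w) (e v w && ((w \in U) == (v \in U))) +
               \sum_(v | v != w) (e v w && ((w \in U) != (v \in U))) = k.
  rewrite -big_split -(e_reg w).
  transitivity (\sum_(v | v != w) (e v w && predT v)).
    by apply: eq_bigr => v _; case: (e v w); case: (_ == _).
  by rewrite drop_w; apply: eq_card => u; rewrite !inE andbT.
have others :
    \sum_(v | v != w) cut_deg (toggle U w) v +
    \sum_(v | v != w) (e v w && ((w \in U) != (v \in U))) =
    \sum_(v | v != w) cut_deg U v +
    \sum_(v | v != w) (e v w && ((w \in U) == (v \in U))).
  by rewrite -!big_split; apply: eq_bigr => v; apply: cut_deg_toggle_other.
rewrite /cut_weight (bigD1 w) // [in RHS](bigD1 w) //=.
have := cut_deg_toggle_self U w; lia.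
Qed.

Lemma sdist_sym U W : sdist U W = sdist W U.
Proof. by apply: eq_card => u; rewrite !inE eq_sym. Qed.

Lemma sdist_triangle U W X : sdist U X <= sdist U W + sdist W X.
Proof.
apply: leq_trans (leq_card_setU _ _); apply/subset_leq_card/subsetP => u.
by rewrite !inE; case: (u \in U); case: (u \in W); case: (u \in X).
Qed.

Lemma sdist_toggle U w : sdist U (toggle U w) = 1.
Proof.
rewrite -(cards1 w); apply: eq_card => u; rewrite !inE.
by case: (u \in U); case: (u == w).
Qed.

Lemma sdistxx U : sdist U U = 0.
Proof.
by apply/eqP; rewrite cards_eq0; apply/eqP/setP => u; rewrite !inE eqxx.
Qed.

(* Toggling a vertex with more than (k + t)/2 cross edges lowers the cut
   weight by at least 2 (t + 1). *)
Lemma exists_stable_near t U :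
  exists2 W, stable t W & sdist U W * (2 * t.+1) <= cut_weight U.
Proof.
move Uc: (cut_weight U) => c; elim/ltn_ind: c U Uc => c IH U Uc.
have [Ust|/forallPn[w]] := boolP (stable t U); first by exists U; rewrite ?sdistxx.
rewrite -ltnNge => w_heavy.
have toggle_w := cut_weight_toggle U w.
have [|W W_stable near_W] := IH _ _ (toggle U w) erefl; first lia.
exists W => //.
have := sdist_triangle U (toggle U w) W; rewrite sdist_toggle => tri.
apply: leq_trans (leq_mul tri (leqnn _)) _; lia.
Qed.

Definition signature Q v := [seq v \in U | U : {set V} <- Q].
Definition atom Q v := [set u | signature Q u == signature Q v].
Definition small_part Q := [set v | 2 * #|atom Q v| <= k].
Definition big_atoms Q := atom Q @: ~: small_part Q.
Definition splits U A := (k < 2 * #|A :&: U|) && (k < 2 * #|A :\: U|).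

Lemma atom_id Q v : v \in atom Q v.
Proof. by rewrite inE. Qed.

Lemma eq_atom Q u v : u \in atom Q v -> atom Q u = atom Q v.
Proof. by rewrite inE => /eqP uv; apply/setP => x; rewrite !inE uv. Qed.

Lemma mem_small_part Q u v :
  u \in atom Q v -> (u \in small_part Q) = (v \in small_part Q).
Proof. by move=> uv; rewrite !inE (eq_atom uv). Qed.

Lemma atom_cons U Q v :
  atom (U :: Q) v = if v \in U then atom Q v :&: U else atom Q v :\: U.
Proof.
apply/setP => u; rewrite inE /signature !map_cons eqseq_cons.
by case: (v \in U); rewrite !inE ?eqb_id ?eqbF_neg andbC.
Qed.

Lemma atom_cons_sub U Q v : atom (U :: Q) v \subset atom Q v.
Proof.
by rewrite atom_cons; case: ifP => _; [apply: subsetIl | apply: subsetDl].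
Qed.

Lemma small_part_cons U Q : small_part Q \subset small_part (U :: Q).
Proof.
apply/subsetP => v; rewrite !inE; apply: leq_trans.
by rewrite leq_mul2l subset_leq_card ?orbT ?atom_cons_sub.
Qed.

Lemma card_nbrs_outside_atom Q v :
  #|[set u | e v u && (u \notin atom Q v)]| <= \sum_(U <- Q) cut_deg U v.
Proof.
elim: Q => [|U Q IH].
  by rewrite big_nil leqn0 cards_eq0; apply/eqP/setP => u; rewrite !inE eqxx andbF.
rewrite big_cons; apply: leq_trans (leq_add (leqnn (cut_deg U v)) IH).
apply: leq_trans (leq_card_setU _ _); apply/subset_leq_card/subsetP => u.
rewrite !inE eqseq_cons negb_and => /andP[-> /=].
by case/orP => ->; rewrite ?orbT.
Qed.

Lemma small_part_nbrs Q v :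
  v \in small_part Q -> k <= 2 * #|[set u | e v u && (u \notin atom Q v)]|.
Proof.
rewrite inE => small_v; have := cardsID (atom Q v) [set u | e v u].
have -> : [set u | e v u] :\: atom Q v = [set u | e v u && (u \notin atom Q v)].
  by apply/setP => u; rewrite !inE andbC.
have : #|[set u | e v u] :&: atom Q v| <= #|atom Q v|.
  exact/subset_leq_card/subsetIr.
rewrite e_reg; lia.
Qed.

(* Each small-part vertex has at least k/2 neighbours outside its atom, and
   each such edge is cut by some member of Q. *)
Lemma small_part_card Q B : (forall U, U \in Q -> cut_weight U <= B) ->
  #|small_part Q| * k <= 2 * (size Q * B).
Proof.
move=> QB; rewrite -sum_nat_const.
apply: (@leq_trans (\sum_(v in small_part Q) 2 * \sum_(U <- Q) cut_deg U v)).
  apply: leq_sum => v /small_part_nbrs/leq_trans; apply.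
  by rewrite leq_mul2l card_nbrs_outside_atom orbT.
apply: (@leq_trans (\sum_v 2 * \sum_(U <- Q) cut_deg U v)).
  by rewrite [X in _ <= X](bigID (mem (small_part Q))) leq_addr.
rewrite -big_distrr leq_mul2l /= exchange_big /=.
rewrite mulnC -iter_addn_0 -(count_predT Q) -big_const_seq big_seq.
by rewrite [X in _ <= X]big_seq; apply: leq_sum => U /QB.
Qed.

Lemma big_atoms_card Q : #|big_atoms Q| * k <= 2 * #|V|.
Proof.
have disj : trivIset (big_atoms Q).
  apply/trivIsetP => _ _ /imsetP[u _ ->] /imsetP[v _ ->] neq_uv.
  rewrite -setI_eq0; apply/set0Pn => -[x]; rewrite inE => /andP[xu xv].
  by move/eqP: neq_uv; apply; rewrite -(eq_atom xu) (eq_atom xv).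
rewrite -sum_nat_const.
apply: (@leq_trans (\sum_(A in big_atoms Q) 2 * #|A|)).
  apply: leq_sum => A /imsetP[v]; rewrite !inE -ltnNge => v_big ->.
  exact: ltnW.
by rewrite -big_distrr leq_mul2l (eqP disj) max_card orbT.
Qed.

(* The two big halves are big atoms of U :: Q, and every other big atom of Q
   still contains one, being larger than the small part. *)
Lemma big_atoms_cons_card U Q A : 2 * #|small_part (U :: Q)| < k ->
  A \in big_atoms Q -> splits U A -> #|big_atoms Q| < #|big_atoms (U :: Q)|.
Proof.
move=> small_UQ /imsetP[v0 v0_big ->] /andP[inU outU].
set X := ~: small_part (U :: Q).
have -> : big_atoms Q = atom Q @: X.
  apply/eqP; rewrite eqEsubset andbC imsetS ?setCS ?small_part_cons //=.
  apply/subsetP => A' /imsetP[v]; rewrite !inE -ltnNge => v_big ->.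
  have /subsetPn[w wv wX] : ~~ (atom Q v \subset small_part (U :: Q)).
    by apply/negP => /subset_leq_card; lia.
  by rewrite -(eq_atom wv) imset_f // inE.
have [a] : exists a, a \in atom Q v0 :&: U.
  by apply/set0Pn; rewrite -card_gt0; lia.
have [b] : exists b, b \in atom Q v0 :\: U.
  by apply/set0Pn; rewrite -card_gt0; lia.
move=> /setDP[bv0 bU] /setIP[av0 aU].
have a_atom : atom (U :: Q) a = atom Q v0 :&: U.
  by rewrite atom_cons aU (eq_atom av0).
have b_atom : atom (U :: Q) b = atom Q v0 :\: U.
  by rewrite atom_cons (negbTE bU) (eq_atom bv0).
apply: (card_imset_lt_refine (a := a) (b := b)).
- move=> u u' eq_u; apply: eq_atom; apply: (subsetP (atom_cons_sub U Q u')).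
  by rewrite -eq_u atom_id.
- by rewrite !inE a_atom -ltnNge.
- by rewrite !inE b_atom -ltnNge.
- by rewrite (eq_atom av0) (eq_atom bv0).
- rewrite a_atom b_atom; apply/eqP => /setP/(_ a).
  by rewrite in_setI in_setD aU av0.
Qed.

Section Saturation.

Variables (good : {set V} -> Prop) (B J : nat).
Hypothesis good_weight : forall U, good U -> cut_weight U <= B.
Hypothesis budget : 4 * J * B < k * k.
Hypothesis few_big_atoms : 2 * #|V| < J.+1 * k.
Hypothesis V_big : k < 2 * #|V|.

Definition saturated Q :=
  forall U, good U -> forall A, A \in big_atoms Q -> ~~ splits U A.

Definition majority_atoms Q U :=
  [set A in big_atoms Q | #|A :\: U| < #|A :&: U|].
Definition rounding Q U := cover (majority_atoms Q U).

Lemma k_gt0 : 0 < k.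
Proof. by move: budget; case: k => //; rewrite muln0. Qed.

Lemma big_atoms_le Q : #|big_atoms Q| <= J.
Proof.
rewrite -ltnS -(ltn_pmul2r k_gt0).
exact: leq_ltn_trans (big_atoms_card Q) few_big_atoms.
Qed.

Lemma small_part_cons_card U Q :
  (forall W, W \in U :: Q -> good W) -> size Q < J ->
  2 * #|small_part (U :: Q)| < k.
Proof.
move=> UQ_good QJ; rewrite -(ltn_pmul2r k_gt0) -mulnA.
apply: leq_ltn_trans (leq_mul (leqnn 2) (small_part_card _)) _.
  by move=> W /UQ_good; apply: good_weight.
apply: leq_ltn_trans budget; rewrite !mulnA leq_mul2r /=; apply/orP; right; lia.
Qed.

Lemma exists_saturated :
  exists2 Q, (forall W, W \in Q -> good W) & size Q <= J /\ saturated Q.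
Proof.
have big_nil : 0 < #|big_atoms [::]|.
  have /card_gt0P[v _] : 0 < #|V| by lia.
  apply/card_gt0P; exists (atom [::] v); apply: imset_f.
  rewrite !inE -ltnNge (eq_card (B := V)) //; exact: atom_id.
suff grow m Q : J - size Q <= m -> (forall W, W \in Q -> good W) ->
    size Q < #|big_atoms Q| ->
    exists2 Q, (forall W, W \in Q -> good W) & size Q <= J /\ saturated Q.
  by apply: (grow J [::]); rewrite /= ?subn0.
elim: m Q => [|m IH] Q Qm Q_good QA; have QJ := leq_trans QA (big_atoms_le Q).
  lia.
have [sat|unsat] := classic (saturated Q).
  by exists Q => //; split=> //; exact: ltnW.
have [U [A [U_good A_big U_splits]]] :
    exists U A, [/\ good U, A \in big_atoms Q & splits U A].
  apply: NNPP => none; apply: unsat => U U_good A A_big; apply/negP => U_splits.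
  by apply: none; exists U, A.
have UQ_good W : W \in U :: Q -> good W by rewrite inE => /predU1P[->|/Q_good].
apply: (IH (U :: Q)) => //=; first lia.
apply: leq_ltn_trans QA _; apply: big_atoms_cons_card A_big U_splits.
exact: small_part_cons_card.
Qed.

Lemma mem_rounding Q U x : (x \in rounding Q U) =
  (x \notin small_part Q) && (#|atom Q x :\: U| < #|atom Q x :&: U|).
Proof.
apply/bigcupP/andP => [[_ /setIdP[/imsetP[v v_big ->] maj] xv]|[x_big maj]].
  by rewrite (mem_small_part xv) (eq_atom xv) -in_setC.
by exists (atom Q x); rewrite ?atom_id // inE maj andbT imset_f // inE.
Qed.

(* Rounding only moves vertices that are small for U :: Q, since
   saturation forbids U to split a big atom of Q into two big pieces. *)
Lemma sdist_rounding_small Q U : saturated Q -> good U ->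
  sdist U (rounding Q U) <= #|small_part (U :: Q)|.
Proof.
move=> sat U_good; apply/subset_leq_card/subsetP => x; rewrite !inE mem_rounding.
have [x_small|] := boolP (x \in small_part Q).
  by move=> _; move/subsetP: (small_part_cons U Q) => /(_ x x_small); rewrite inE.
rewrite -in_setC => x_big; have := sat U U_good (atom Q x) (imset_f _ x_big).
by rewrite /splits atom_cons; case: (x \in U) => /=; lia.
Qed.

Lemma sdist_rounding Q U : (forall W, W \in Q -> good W) -> size Q <= J ->
  saturated Q -> good U -> sdist U (rounding Q U) * k <= 2 * (J.+1 * B).
Proof.
move=> Q_good QJ sat U_good.
apply: leq_trans (leq_mul (sdist_rounding_small sat U_good) (leqnn k)) _.
apply: leq_trans (small_part_card _) _.
  by move=> W; rewrite inE => /predU1P[->|/Q_good]; apply: good_weight.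
by rewrite leq_mul2l leq_mul2r /= ltnS QJ !orbT.
Qed.

Lemma sdist_same_rounding Q U U' : (forall W, W \in Q -> good W) ->
  size Q <= J -> saturated Q -> good U -> good U' ->
  rounding Q U = rounding Q U' -> sdist U U' * k <= 4 * J.+1 * B.
Proof.
move=> Q_good QJ sat U_good U'_good R_U.
apply: leq_trans (leq_mul (sdist_triangle U (rounding Q U) U') (leqnn k)) _.
rewrite mulnDl [sdist (rounding Q U) U']sdist_sym R_U.
have := sdist_rounding Q_good QJ sat U_good.
have := sdist_rounding Q_good QJ sat U'_good.
by rewrite R_U; lia.
Qed.

Lemma stable_near_rounding Q t R : exists W, stable t W /\
  ((exists2 U, good U & rounding Q U = R) ->
   exists2 U, good U /\ rounding Q U = R & sdist U W * (2 * t.+1) <= B).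
Proof.
have [[U U_good <-]|none] := classic (exists2 U, good U & rounding Q U = R).
  have [W W_stable UW] := exists_stable_near t U.
  exists W; split=> // _; exists U => //.
  exact: leq_trans UW (good_weight U_good).
have [W W_stable _] := exists_stable_near t R.
by exists W; split=> // /none.
Qed.

Theorem stable_cuts_cover t : exists cuts : 'I_(2 ^ J) -> {set V},
  (forall i, stable t (cuts i)) /\
  forall U, good U ->
    exists i, sdist U (cuts i) <= 4 * J.+1 * B %/ k + B %/ (2 * t.+1).
Proof.
have [Q Q_good [QJ sat]] := exists_saturated.
have [f f_spec] := fin_all_exists (stable_near_rounding Q t).
pose keys := enum (powerset (big_atoms Q)).
exists (fun i => f (cover (nth set0 keys i))); split=> [i|U U_good].
  by case: (f_spec (cover (nth set0 keys i))).
have key_U : majority_atoms Q U \in keys.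
  by rewrite mem_enum powersetE; apply/subsetP => A; rewrite inE => /andP[].
have key_lt : index (majority_atoms Q U) keys < 2 ^ J.
  move: key_U; rewrite -index_mem -cardE card_powerset => /leq_trans; apply.
  exact: (leq_pexp2l _ (big_atoms_le Q)).
exists (Ordinal key_lt); rewrite /= nth_index // -/(rounding Q U).
have [_ /(_ (ex_intro2 _ _ U U_good erefl))[U' [U'_good R_U'] U'_near]] :=
  f_spec (rounding Q U).
apply: leq_trans (sdist_triangle U U' _) (leq_add _ _); last by rewrite leq_divRL.
by rewrite leq_divRL ?k_gt0 //; apply: (sdist_same_rounding Q_good QJ sat).
Qed.

End Saturation.

End RegularGraph.

Section Bipartite.

Variables (n : nat) (adj : 'I_n -> 'I_n -> bool).
Implicit Types (S T : {set 'I_n}) (W : {set 'I_n + 'I_n}).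

Definition bip_edge (u v : 'I_n + 'I_n) :=
  match u, v with
  | inl x, inr y | inr y, inl x => adj x y
  | _, _ => false
  end.

Definition side_X W := [set x | inl x \in W].
Definition side_Y W := [set y | inr y \in W].
Definition bip_cut S T : {set 'I_n + 'I_n} :=
  [set v | match v with inl x => x \in S | inr y => y \in T end].

Lemma bip_edge_sym : symmetric bip_edge.
Proof. by case=> [x|y] [x'|y']. Qed.

Lemma bip_edge_irr : irreflexive bip_edge.
Proof. by case. Qed.

Lemma bip_edge_regular k :
  bip_regular k adj -> forall v, #|[set u | bip_edge v u]| = k.
Proof.
case=> degX degY [x|y]; rewrite card_sum_set.
  rewrite (@eq_card0 _ [set _ | _]) => [|x']; last by rewrite !inE.
  by rewrite -(degX x); apply: eq_card => y; rewrite !inE.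
rewrite [X in _ + X](@eq_card0 _ [set _ | _]) => [|y']; last by rewrite !inE.
by rewrite addn0 -(degY y); apply: eq_card => x; rewrite !inE.
Qed.

Lemma bip_regular_le k : bip_regular k adj -> (0 < n)%N -> (k <= n)%N.
Proof.
case=> degX _ n_gt0; rewrite -(degX (Ordinal n_gt0)).
by rewrite -[X in (_ <= X)%N]card_ord max_card.
Qed.

Lemma side_X_cut S T : side_X (bip_cut S T) = S.
Proof. by apply/setP => x; rewrite !inE. Qed.

Lemma side_Y_cut S T : side_Y (bip_cut S T) = T.
Proof. by apply/setP => y; rewrite !inE. Qed.

Lemma cut_deg_inl W x :
  cut_deg bip_edge W (inl x) = degCr_X adj (side_X W) (side_Y W) x.
Proof.
rewrite /cut_deg card_sum_set (@eq_card0 _ [set _ | _]) => [|x'].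
  by apply: eq_card => y; rewrite !inE /is_cross !inE eq_sym.
by rewrite !inE.
Qed.

Lemma cut_deg_inr W y :
  cut_deg bip_edge W (inr y) = degCr_Y adj (side_X W) (side_Y W) y.
Proof.
rewrite /cut_deg card_sum_set [X in _ + X](@eq_card0 _ [set _ | _]) => [|y'].
  by rewrite addn0; apply: eq_card => x; rewrite !inE /is_cross !inE.
by rewrite !inE.
Qed.

Lemma num_cross_X S T : num_cross adj S T = \sum_x degCr_X adj S T x.
Proof.
rewrite /num_cross -sum1dep_card big_mkcond /=.
rewrite -(pair_big xpredT xpredT
  (fun x y => if is_cross adj S T x y then 1 else 0)) /=.
by apply: eq_bigr => x _; rewrite /degCr_X -sum1dep_card [in RHS]big_mkcond.
Qed.

Lemma num_cross_Y S T : num_cross adj S T = \sum_y degCr_Y adj S T y.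
Proof.
rewrite num_cross_X /degCr_X /degCr_Y.
under eq_bigr => x _ do rewrite -sum1dep_card big_mkcond /=.
rewrite exchange_big /=; apply: eq_bigr => y _.
by rewrite -sum1dep_card [in RHS]big_mkcond.
Qed.

Lemma cut_weight_bip W :
  cut_weight bip_edge W = 2 * num_cross adj (side_X W) (side_Y W).
Proof.
rewrite /cut_weight big_sumType /=.
under eq_bigr => x _ do rewrite cut_deg_inl.
under [X in _ + X]eq_bigr => y _ do rewrite cut_deg_inr.
by rewrite -num_cross_X -num_cross_Y mul2n addnn.
Qed.

Lemma sdist_bip W W' :
  sdist W W' = cut_dist (side_X W) (side_Y W) (side_X W') (side_Y W').
Proof.
rewrite /sdist /cut_dist card_sum_set -addnA -!card_symdiff.
by congr (_ + _); apply: eq_card => x; rewrite !inE.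
Qed.

Lemma stable_degCr k t W x : stable bip_edge k t W ->
  (2 * degCr_X adj (side_X W) (side_Y W) x <= k + t)%N /\
  (2 * degCr_Y adj (side_X W) (side_Y W) x <= k + t)%N.
Proof.
by move/forallP=> W_stable; rewrite -cut_deg_inl -cut_deg_inr !W_stable.
Qed.

End Bipartite.

Section Estimates.
Local Open Scope R_scope.

Lemma INR_muln m p : INR (m * p) = INR m * INR p.
Proof. by rewrite mulnE mult_INR. Qed.

Lemma INR_expn m j : INR (m ^ j) = INR m ^ j.
Proof. by elim: j => [|j IH]; rewrite ?expn0 // expnS INR_muln IH. Qed.

Lemma nat_le_floor (m B : nat) (r : R) : INR m <= r -> r < INR B + 1 -> (m <= B)%N.
Proof. by move=> mr rB; rewrite -ltnS; apply/ltP/INR_lt; rewrite S_INR; lra. Qed.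

Lemma log13_cube n : 1 < log13 n -> log13 n ^ 3 = ln (INR n).
Proof.
move=> L_gt1.
have ln_pos : 0 < ln (INR n).
  apply: Rnot_le_lt => ln_le; move: L_gt1; rewrite /log13 /Rpower.
  have -> : ln (ln (INR n)) = 0.
    by rewrite {1}/ln; case: Rlt_dec => [?|//]; exfalso; lra.
  by rewrite Rmult_0_r exp_0; lra.
rewrite -Rpower_pow; last lra.
rewrite /log13 Rpower_mult -[in RHS](Rpower_1 _ ln_pos); congr Rpower.
by rewrite /=; field.
Qed.

Lemma scale_bounds (n k : nat) (L : R) : (0 < n)%N -> (k <= n)%N -> 0 < L ->
  1000 <= INR k * L / INR n ->
  [/\ 1000 <= L, (0 < k)%N & 1000 * (INR n / L) <= INR k].
Proof.
move=> n_gt0 kn L_pos HK.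
have n_pos : 0 < INR n by apply/lt_0_INR/ltP.
have k_le : INR k <= INR n by apply/le_INR/leP.
have kL : 1000 * INR n <= INR k * L.
  have := Rmult_le_compat_r _ _ _ (Rlt_le _ _ n_pos) HK.
  by have -> : INR k * L / INR n * INR n = INR k * L by field; lra.
have k_pos : 0 < INR k by nra.
split; [nra | by apply/ltP/INR_lt | ].
have -> : 1000 * (INR n / L) = 1000 * INR n / L by field; lra.
apply: (Rmult_le_reg_r L) => //.
by have -> : 1000 * INR n / L * L = 1000 * INR n by field; lra.
Qed.

Lemma pow2_bounds (n k : nat) : (0 < k)%N -> (k <= n)%N ->
  Rpower 2 (3 * INR n / INR k) <= INR (2 ^ ((4 * n) %/ k)) <=
  Rpower 2 (4 * INR n / INR k).
Proof.
move=> k_gt0 kn; set J := ((4 * n) %/ k)%N.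
have k_pos : 0 < INR k by apply/lt_0_INR/ltP.
have k_le : INR k <= INR n by apply/le_INR/leP.
have J_up : INR J * INR k <= 4 * INR n.
  have := le_INR _ _ (elimT leP (leq_divM (4 * n) k)).
  by rewrite !INR_muln -/J /=; lra.
have J_low : 4 * INR n < (INR J + 1) * INR k.
  have := lt_INR _ _ (elimT ltP (ltn_ceil (4 * n) k_gt0)).
  by rewrite !INR_muln -/J (S_INR J) /=; lra.
rewrite INR_expn -Rpower_pow /=; last lra.
have -> : 1 + 1 = 2 by lra.
split; apply: Rle_Rpower; try lra; apply: (Rmult_le_reg_r (INR k)) => //.
  have -> : 3 * INR n / INR k * INR k = 3 * INR n by field; lra.
  lra.
have -> : 4 * INR n / INR k * INR k = 4 * INR n by field; lra.
lra.
Qed.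

Lemma budget_bound (k J B : nat) (d L : R) : 1000 <= L -> 0 < d ->
  1000 * d <= INR k -> INR J * INR k <= 4 * (d * L) ->
  INR B <= 8 * d * INR k / L ^ 2 -> (4 * J * B < k * k)%N.
Proof.
move=> L_ge d_pos d_le J_le B_le.
have B_L : INR B * L ^ 2 <= 8 * d * INR k.
  have := Rmult_le_compat_r (L ^ 2) _ _ (pow2_ge_0 L) B_le.
  by have -> : 8 * d * INR k / L ^ 2 * L ^ 2 = 8 * d * INR k by field; lra.
have J_pos := pos_INR J; have B_pos := pos_INR B.
have prod : INR J * INR k * (INR B * L ^ 2) <= 4 * (d * L) * (8 * d * INR k).
  by apply: Rmult_le_compat => //; nra.
have JB_L : 4 * INR J * INR B * L <= 128 * d * d.
  apply: (Rmult_le_reg_r (INR k * L)); first nra.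
  by move: prod; rewrite /=; nra.
apply/ltP/INR_lt; rewrite !INR_muln /=.
apply: (Rmult_lt_reg_r L); first lra.
nra.
Qed.

Lemma radius_bound (k J B t : nat) (d L : R) : 1000 <= L -> 0 < d ->
  1000 * d <= INR k -> INR k <= d * L -> INR J * INR k <= 4 * (d * L) ->
  INR B <= 8 * d * INR k / L ^ 2 -> d < INR t + 1 ->
  INR (4 * J.+1 * B %/ k + B %/ (2 * t.+1)) <= d.
Proof.
move=> L_ge d_pos d_le k_le J_le B_le t_gt.
set a := (4 * J.+1 * B %/ k)%N; set s := (B %/ (2 * t.+1))%N.
have B_L : INR B * L ^ 2 <= 8 * d * INR k.
  have := Rmult_le_compat_r (L ^ 2) _ _ (pow2_ge_0 L) B_le.
  by have -> : 8 * d * INR k / L ^ 2 * L ^ 2 = 8 * d * INR k by field; lra.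
have a_k : INR a * INR k <= 4 * (INR J + 1) * INR B.
  have := le_INR _ _ (elimT leP (leq_divM (4 * J.+1 * B) k)).
  by rewrite !INR_muln -/a (S_INR J) /=; lra.
have s_t : INR s * (2 * (INR t + 1)) <= INR B.
  have := le_INR _ _ (elimT leP (leq_divM B (2 * t.+1))).
  by rewrite !INR_muln -/s (S_INR t) /=; lra.
have k_pos : 0 < INR k by lra.
have a_pos := pos_INR a; have s_pos := pos_INR s; have B_pos := pos_INR B.
have a_le : INR a * L <= d / 2.
  have aB : INR a * INR k * INR k <= 20 * d * L * INR B.
    have : (INR J + 1) * INR k <= 5 * (d * L) by lra.
    nra.
  have akL : INR a * INR k * L <= 160 * d * d.
    apply: (Rmult_le_reg_r (INR k)) => //.
    have : INR a * INR k * INR k * L <= 20 * d * (INR B * L ^ 2) by rewrite /=; nra.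
    nra.
  apply: (Rmult_le_reg_r (INR k)) => //; nra.
have s_le : INR s * L <= 4 * d.
  have : INR s * (2 * d) <= INR B by nra.
  have : INR B * L <= 8 * d * d by nra.
  nra.
rewrite plus_INR; nra.
Qed.
(* The witnesses are t = floor d and B = floor (8 d k / L^2), where
   L = log^(1/3) n and d = n / L; B bounds the weight of internal cuts. *)
Lemma parameter_choice (n k : nat) : (0 < n)%N -> (k <= n)%N ->
  1000 <= INR k * log13 n / INR n ->
  exists t B : nat, [/\ (0 < k)%N, INR t <= INR n / log13 n,
    (4 * ((4 * n) %/ k) * B < k * k)%N,
    forall m, INR m <= 4 * INR n * INR k / ln (INR n) -> (2 * m <= B)%N &
    INR (4 * ((4 * n) %/ k).+1 * B %/ k + B %/ (2 * t.+1)) <= INR n / log13 n].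
Proof.
move=> n_gt0 kn HK; have L_pos : 0 < log13 n := exp_pos _.
have [L_ge k_gt0 d_le] := scale_bounds n_gt0 kn L_pos HK.
set L := log13 n in L_pos L_ge d_le *; set d := INR n / L in d_le *.
have k_pos : 0 < INR k by apply/lt_0_INR/ltP.
have d_pos : 0 < d by apply: Rdiv_lt_0_compat; [apply/lt_0_INR/ltP | lra].
have n_dL : INR n = d * L by rewrite /d; field; lra.
have k_le : INR k <= d * L by rewrite -n_dL; apply/le_INR/leP.
have [t [t_le t_gt]] := Rcomplements.nfloor_ex d (Rlt_le _ _ d_pos).
have [B [B_le B_gt]] : {B : nat | INR B <= 8 * d * INR k / L ^ 2 < INR B + 1}.
  by apply/Rcomplements.nfloor_ex/Rlt_le/Rdiv_lt_0_compat; nra.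
have J_le : INR ((4 * n) %/ k) * INR k <= 4 * (d * L).
  have := le_INR _ _ (elimT leP (leq_divM (4 * n) k)).
  by rewrite !INR_muln -n_dL /=; lra.
exists t, B; split=> //; first exact: budget_bound L_ge d_pos d_le J_le B_le.
  move=> m; rewrite -log13_cube -/L ?n_dL; last lra.
  move=> m_le; apply: (nat_le_floor _ B_gt); rewrite INR_muln [INR 2]/=.
  have -> : 8 * d * INR k / L ^ 2 = 2 * (4 * (d * L) * INR k / L ^ 3).
    by field; lra.
  lra.
exact: (radius_bound (L := L)).
Qed.

End Estimates.

Theorem lemma2p4 :
  exists c1 c2 : R, (0 < c1)%R /\ (0 < c2)%R /\
  exists (K : R) (N : nat),
  forall (n k : nat) (adj : 'I_n -> 'I_n -> bool),
    (N <= n)%N ->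
    (K <= INR k * log13 n / INR n)%R ->
    bip_regular k adj ->
    let eps := (INR n / (INR k * log13 n))%R in
    exists (m : nat) (cuts : 'I_m -> {set 'I_n} * {set 'I_n}),
      (Rpower 2 (c1 * INR n / INR k) <= INR m <= Rpower 2 (c2 * INR n / INR k))%R /\
      (forall (i : 'I_m) (x : 'I_n),
          (INR (degCr_X adj (cuts i).1 (cuts i).2 x) <= (1 + eps) * INR k / 2)%R /\
          (INR (degCr_Y adj (cuts i).1 (cuts i).2 x) <= (1 + eps) * INR k / 2)%R) /\
      (forall S T : {set 'I_n},
          internal_cut k adj S T -> (#|T| < #|S|)%N ->
          exists i : 'I_m,
            (INR (cut_dist S T (cuts i).1 (cuts i).2) <= eps * INR k)%R).
Proof.
exists 3%R, 4%R; split; [lra | split; [lra |]].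
exists 1000%R, 1%N => n k adj n_gt0 HK reg eps.
have kn := bip_regular_le reg n_gt0.
have [t [B [k_gt0 t_le budget internal_weight radius]]] :=
  parameter_choice n_gt0 kn HK.
have eps_k : (eps * INR k = INR n / log13 n)%R.
  by rewrite /eps; field; split; [apply/Rgt_not_eq/exp_pos | apply: not_0_INR; lia].
pose J := (4 * n) %/ k.
have few_big : (2 * #|{: 'I_n + 'I_n}| < J.+1 * k)%N.
  by have := ltn_ceil (4 * n) k_gt0; rewrite card_sum card_ord -/J; lia.
have V_big : (k < 2 * #|{: 'I_n + 'I_n}|)%N by rewrite card_sum card_ord; lia.
have [cuts [cuts_stable cuts_cover]] := stable_cuts_cover (bip_edge_sym adj)
  (bip_edge_irr adj) (bip_edge_regular reg)
  (good := fun W => cut_weight (bip_edge adj) W <= B) (fun _ W_good => W_good)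
  budget few_big V_big t.
exists (2 ^ J)%N, (fun i => (side_X (cuts i), side_Y (cuts i))).
split; [exact: pow2_bounds | split => [i x | S T S_internal _]].
  have half c : (2 * c <= k + t)%N -> (INR c <= (1 + eps) * INR k / 2)%R.
    by move/leP/le_INR; rewrite INR_muln plus_INR [INR 2]/=; nra.
  by have [/half ? /half ?] := stable_degCr x (cuts_stable i).
have [|i near] := cuts_cover (bip_cut S T).
  by rewrite /= cut_weight_bip side_X_cut side_Y_cut; apply: internal_weight.
exists i; have := sdist_bip (bip_cut S T) (cuts i).
rewrite side_X_cut side_Y_cut /= => <-; rewrite eps_k.
exact: Rle_trans (le_INR _ _ (elimT leP near)) radius.
Qed.
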